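(* Let $H\leq F_2$ and fix $y\in F_2$. For any $xH\in F_2/H$ and all $i\geq 1$, we have $|E_i(xH)|=|\Omega_{i,xH}|$.
   Context: $F_2$ is the free group on $a,b$ and $\Xi=\{a,b,a^{-1},b^{-1}\}$. The directed coset graph of $F_2/H$ has vertex set $F_2/H$ and, for each vertex $rH$ and each $h\in\Xi$, one directed edge from $rH$ to $hrH$ (so loops and parallel edges may occur); two vertices are adjacent if there is an edge between them. Sets $\Omega_{k,xH}\subseteq\Xi$ for $k\geq -1$, $xH\in F_2/H$ are defined recursively: $\Omega_{-1,xH}=\varnothing$ for all $xH$; $\Omega_{0,yH}=\Xi$ and $\Omega_{0,xH}=\varnothing$ for $xH\neq yH$; and for $k\geq 0$, $\Omega_{k+1,zH}=\{h\in\Xi:\Omega_{k-1,zH}=\varnothing\text{ and }\Omega_{k,h^{-1}zH}\neq\varnothing\}$. Sets $E_i$ of directed edges are defined recursively: $E_1$ is the set of all directed edges whose source is $yH$; $E_{i+1}$ is the set of all directed edges $tH\to sH$ such that no directed edge from $sH$ to $tH$ belongs to $E_i$ and there exists a vertex $rH$ with a directed edge $rH\to tH$ in $E_i$. $E_i(xH)$ denotes the set of edges in $E_i$ whose target is $xH$. *)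

From mathcomp Require Import all_boot.
Set Implicit Arguments. Unset Strict Implicit. Unset Printing Implicit Defensive.

(* Letters Xi = {a, b, a^-1, b^-1}, encoded as (is_b, is_inverse):
   a = (false,false), b = (true,false), a^-1 = (false,true), b^-1 = (true,true). *)
Definition Xi : finType := (bool * bool)%type.
Definition linv (x : Xi) : Xi := (x.1, ~~ x.2).

Definition reduced (w : seq Xi) : bool := sorted (fun x y => y != linv x) w.
Definition F2 : eqType := {w : seq Xi | reduced w}.

Definition lmul (x : Xi) (w : seq Xi) : seq Xi :=
  if w is y :: w' then (if y == linv x then w' else x :: w) else [:: x].

Lemma lmul_reduced x w : reduced w -> reduced (lmul x w).
Proof.
case: w => [|y w] //= Hw.
case: ifP => Hy; first exact: (path_sorted Hw).
by rewrite /= Hy Hw.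
Qed.

Definition f2one : F2 := exist _ [::] isT.
Definition lmulF (x : Xi) (g : F2) : F2 :=
  exist _ (lmul x (proj1_sig g)) (lmul_reduced x (proj2_sig g)).
Definition f2mul (g h : F2) : F2 := foldr lmulF h (proj1_sig g).
Definition f2inv (g : F2) : F2 := foldr lmulF f2one (rev (map linv (proj1_sig g))).

Definition is_subgroup (H : pred F2) : Prop :=
  [/\ H f2one, (forall g h, H g -> H h -> H (f2mul g h)) & (forall g, H g -> H (f2inv g))].

(* equality of left cosets: rH = sH  iff  r^-1 s \in H *)
Definition cosEq (H : pred F2) (r s : F2) : bool := H (f2mul (f2inv r) s).

(* Omega sets.  OmPair H y n = (Omega_{n-1,.}, Omega_{n,.}), cosets given by representatives. *)
Fixpoint OmPair (H : pred F2) (y : F2) (n : nat)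
  : (F2 -> {set Xi}) * (F2 -> {set Xi}) :=
  match n with
  | 0 => (fun _ => set0, fun z => if cosEq H z y then [set: Xi] else set0)
  | n'.+1 =>
      let: (p, c) := OmPair H y n' in
      (c, fun z => [set h : Xi | (p z == set0) && (c (lmulF (linv h) z) != set0)])
  end.

(* Omega H y k x  =  Omega_{k, xH}  (k >= 0; Omega_{-1} is empty) *)
Definition Omega (H : pred F2) (y : F2) (k : nat) (x : F2) : {set Xi} :=
  (OmPair H y k).2 x.

(* Directed edges of the coset graph: the edge (r, h) goes from rH to h r H.
   Ef H y i r h  <=>  the edge (rH, h) belongs to E_{i+1}. *)
Fixpoint Ef (H : pred F2) (y : F2) (i : nat) (t : F2) (h : Xi) : bool :=
  match i with
  | 0 => cosEq H t y
  | i'.+1 =>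
      let s := lmulF h t in
      (* no edge from sH to tH lies in E_i *)
      ~~ [exists h' : Xi, cosEq H (lmulF h' s) t && Ef H y i' s h']
      (* some edge rH -> tH lies in E_i ; such edges are (h'^-1 t H, h') *)
      && [exists h' : Xi, Ef H y i' (lmulF (linv h') t) h']
  end.

(* E_i(xH), i >= 1: the edges of E_i with target xH.  An edge with target xH is
   determined by its label h (its source is then h^-1 xH), so we record the labels. *)
Definition E_in (H : pred F2) (y : F2) (i : nat) (x : F2) : {set Xi} :=
  [set h : Xi | Ef H y i.-1 (lmulF (linv h) x) h].

From mathcomp Require Import all_boot.

Set Implicit Arguments.
Unset Strict Implicit.
Unset Printing Implicit Defensive.

(* By induction on i, an edge rH -> hrH lies in E_(i+1) exactly when
   Omega_(i, rH) is nonempty and Omega_(i-1, hrH) is empty: the incoming-edge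
   condition in the definition of E_(i+1) is the recursion defining
   Omega_(i+1, rH) != \emptyset, and the "no reverse edge" condition says that
   hrH carries no edge of E_i, i.e. Omega_(i-1, hrH) is empty.  For the edges
   with target xH, whose sources are h^-1 xH, this condition on the label h is
   precisely the recursive definition of h \in Omega_(i, xH), so E_i(xH) and
   Omega_(i, xH) even coincide as sets of labels. *)

Lemma linvK : involutive linv.
Proof. by case=> a b; rewrite /linv /= negbK. Qed.

Lemma lmul_linvK x w : reduced w -> lmul (linv x) (lmul x w) = w.
Proof.
case: w => [|z w] /=; first by rewrite linvK eqxx.
case: ifP => [/eqP -> | _] Hw; last by rewrite /= linvK eqxx.
by case: w Hw => [|u w] //= /andP [/negbTE ->].
Qed.

Lemma lmulFK x : cancel (lmulF x) (lmulF (linv x)).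
Proof. by case=> w Hw; apply: val_inj; exact: lmul_linvK. Qed.

Lemma lmulFVK x : cancel (lmulF (linv x)) (lmulF x).
Proof. by move=> g; rewrite -{1}(linvK x) lmulFK. Qed.

Definition wmul (w : seq Xi) (g : F2) : F2 := foldr lmulF g w.

Lemma wmul_lmul x w g : reduced w -> wmul (lmul x w) g = lmulF x (wmul w g).
Proof. by case: w => [|z w] //= _; case: ifP => // /eqP ->; rewrite lmulFVK. Qed.

Lemma wmul_val w g : wmul (val (wmul w f2one)) g = wmul w g.
Proof. by elim: w => [|x w IH] //=; rewrite wmul_lmul ?IH //; exact: valP. Qed.

Lemma wmul_rev_linvK w g : wmul (rev (map linv w)) (wmul w g) = g.
Proof.
by elim: w g => [|x w IH] g //=; rewrite rev_cons /wmul foldr_rcons lmulFK; exact: IH.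
Qed.

Lemma wmul_reduced1 w : reduced w -> val (wmul w f2one) = w.
Proof.
elim: w => [|x w IH] // Hw /=; rewrite IH; last exact: path_sorted Hw.
by case: w Hw {IH} => [|u w] //= /andP [/negbTE ->].
Qed.

Lemma f2mulVg g : f2mul (f2inv g) g = f2one.
Proof.
rewrite /f2mul /f2inv -[foldr _ g _]/(wmul _ g) wmul_val.
case: g => w Hw /=; have -> : exist _ w Hw = wmul w f2one.
  by apply: val_inj; rewrite /= wmul_reduced1.
exact: wmul_rev_linvK.
Qed.

Section EdgeLevels.
Variables (H : pred F2) (y : F2).

Definition Omega_pred (k : nat) : F2 -> {set Xi} :=
  if k is k'.+1 then Omega H y k' else fun=> set0.

Lemma OmPair_fst k : (OmPair H y k).1 = Omega_pred k.
Proof. by case: k => //= k; rewrite /Omega; case: (OmPair H y k). Qed.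

Lemma OmegaS k z : Omega H y k.+1 z =
  [set h | (Omega_pred k z == set0) && (Omega H y k (lmulF (linv h) z) != set0)].
Proof. by rewrite -OmPair_fst /Omega /=; case: (OmPair H y k). Qed.

Lemma Omega0_neq0 z : (Omega H y 0 z != set0) = cosEq H z y.
Proof.
rewrite /Omega /=; case: (cosEq H z y); last by rewrite eqxx.
by apply/set0Pn; exists (true, true); rewrite inE.
Qed.

Lemma OmegaS_neq0 k z : (Omega H y k.+1 z != set0) =
  (Omega_pred k z == set0) && [exists h, Omega H y k (lmulF (linv h) z) != set0].
Proof.
rewrite OmegaS; apply/set0Pn/andP => [[h] | [Pz /existsP [h Oh]]].
  by rewrite inE => /andP [Pz Oh]; split=> //; apply/existsP; exists h.
by exists h; rewrite inE Pz Oh.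
Qed.

Hypothesis H1 : H f2one.

Lemma cosEq_refl t : cosEq H t t.
Proof. by rewrite /cosEq f2mulVg. Qed.

Lemma Ef_Omega i t h :
  Ef H y i t h = (Omega H y i t != set0) && (Omega_pred i (lmulF h t) == set0).
Proof.
elim: i t h => [|i IH] t h /=; first by rewrite Omega0_neq0 eqxx andbT.
have incoming : [exists h', Ef H y i (lmulF (linv h') t) h'] = (Omega H y i.+1 t != set0).
  rewrite OmegaS_neq0; apply/existsP/andP => [[h'] | [Pt /existsP [h' Oh']]].
    by rewrite IH lmulFVK => /andP [Oh' Pt]; split=> //; apply/existsP; exists h'.
  by exists h'; rewrite IH lmulFVK Oh' Pt.
rewrite incoming andbC; case Ot: (Omega H y i.+1 t != set0) => //=.
(* The reverse edge, if any, can be taken with label h^-1, landing on t itself. *)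
have reverse : [exists h', cosEq H (lmulF h' (lmulF h t)) t && Ef H y i (lmulF h t) h']
               = (Omega H y i (lmulF h t) != set0).
  apply/existsP/idP => [[h' /andP [_]] | Os]; first by rewrite IH => /andP [].
  exists (linv h); rewrite IH lmulFK cosEq_refl Os /=.
  by move: Ot; rewrite OmegaS_neq0 => /andP [].
by rewrite reverse negbK.
Qed.

Lemma E_in_Omega i x : 1 <= i -> E_in H y i x = Omega H y i x.
Proof.
case: i => [|i] // _; apply/setP => h.
by rewrite /E_in OmegaS !inE Ef_Omega lmulFVK andbC.
Qed.

End EdgeLevels.

Theorem lemma4p1 (H : pred F2) (HH : is_subgroup H) (y x : F2) (i : nat) :
  1 <= i -> #|E_in H y i x| = #|Omega H y i x|.
Proof. by case: HH => H1 _ _ i_gt0; rewrite E_in_Omega. Qed.
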